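(* Let $p$ be an odd prime, $h\ge 1$, $f(x,z)\in\mathbb{F}_{p^h}[x,z]$, and let $\mathcal{S}\subset\mathbb{A}^3$ be the affine surface $y^p-y=f(x,z)$. For each $\gamma\in\mathbb{F}_{p^h}$ with $f(x,\gamma)$ non-constant, let $\mathcal{Z}_\gamma=V(y^p-y-f(x,z),\,z-\gamma)$, viewed as a plane curve $y^p-y=f(x,\gamma)$ in the plane $z=\gamma$. Let $\eta$ be a positive integer and $$\Gamma=\{\gamma\in\mathbb{F}_{p^h}: f(x,\gamma)\text{ non-constant and } \#\pi_x(\mathcal{Z}_\gamma(\mathbb{F}_{p^h}))\ge\eta\}.$$ Assume there are non-negative integers $\nu,\rho_1,\rho_2,\rho_3$ such that (1) $\deg(\mathcal{Z}_\gamma)\le\nu$ for all $\gamma\in\Gamma$; (2) $2\le\rho_1\le\eta$, $2\le\rho_2\le p$, and $0\le\rho_3\le p^2-1$; (3) there are at least $\rho_3+1$ values $\gamma\in\Gamma$ with $\#\mathcal{Z}_\gamma(\mathbb{F}_{p^h})\ge\nu(\eta-\rho_1+p-\rho_2)+1$. Let $T=\{(x,y,z)\in\mathcal{S}(\mathbb{F}_{p^h}): z\in\Gamma\}$ and $$V=\langle x^iy^jz^k: 0\le i\le\eta-\rho_1,\ 0\le j\le p-\rho_2,\ 0\le k\le\rho_3\rangle\subset\mathbb{F}_{p^h}[x,y,z],$$ and let $C=C(V,T)$. Then $C$ has hierarchical locality in the following sense: for every position $i$, corresponding to a point $P_i=(a,b,c)\in T$, (a) the lower code $C_{2,i}$ (the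 puncturing of $C$ to the $p$ positions of the fiber $\{(a,b+\delta,c):\delta\in\mathbb{F}_p\}\subset T$ of $\pi_{x,z}$ through $P_i$) has dimension at most $s_2=p-\rho_2+1$ and minimum distance at least $d_2=\rho_2$; (b) the middle code $C_{1,i}$ (the puncturing of $C$ to the positions of the points of $T$ with $z$-coordinate $c$, i.e. the points of $\mathcal{Z}_c(\mathbb{F}_{p^h})$) has dimension at most $s_1=(\eta-\rho_1+1)(p-\rho_2+1)$ and minimum distance at least $d_1=\rho_1\rho_2$, and contains the support of $C_{2,i}$. Furthermore the evaluation map on $V$ is injective, so $\dim C=(\eta-\rho_1+1)(p-\rho_2+1)(\rho_3+1)$.
   Context: A linear code of length $n$ over $\mathbb{F}_q$ is a subspace of $\mathbb{F}_q^n$; its minimum distance is the minimum Hamming distance between distinct codewords. For $I=\{i_1,\dots,i_s\}\subset\{1,\dots,n\}$, the punctured code $C|_I=\{(c_{i_1},\dots,c_{i_s}):(c_1,\dots,c_n)\in C\}$. For an ordered finite set $T=\{P_1,\dots,P_n\}$ of points and a vector space $V$ of polynomial functions, the evaluation code is $C(V,T)=\{(g(P_1),\dots,g(P_n)):g\in V\}$ (the ordering of $T$ is arbitrary). $\pi_x(a,b,c)=a$, $\pi_z(a,b,c)=c$, $\pi_{x,z}(a,b,c)=(a,c)$ are the coordinate projections on $\mathbb{A}^3$. $\deg(\mathcal{Z}_\gamma)$ denotes the degree of the plane curve $y^p-y=f(x,\gamma)$. *)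

From HB Require Import structures.
From mathcomp Require Import all_boot all_order all_algebra all_field.
Set Implicit Arguments. Unset Strict Implicit. Unset Printing Implicit Defensive.
Import GRing.Theory.
Local Open Scope ring_scope.

(* Bivariate polynomials f(x,z) are represented as f : {poly {poly F}},
   f = \sum_k c_k(x) z^k : the outer variable is z, the inner one is x. *)

Definition fsec (F : fieldType) (f : {poly {poly F}}) (g : F) : {poly F} :=
  f.[g%:P].

Definition nonconst (F : fieldType) (q : {poly F}) : bool := (1 < size q)%N.

(* defining polynomial y^p - y - g(x) of the plane curve, as a polynomial
   in y with coefficients in F[x] *)
Definition curve_poly (F : fieldType) (p : nat) (g : {poly F}) : {poly {poly F}} :=
  'X^p - 'X - g%:P.

Definition totdeg (F : fieldType) (q : {poly {poly F}}) : nat :=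
  \max_(i < size q) addn i (size (nth 0%R q i)).-1.

Definition degZ (F : fieldType) (p : nat) (f : {poly {poly F}}) (g : F) : nat :=
  totdeg (curve_poly p (fsec f g)).

Definition Zpts (F : finFieldType) (p : nat) (f : {poly {poly F}}) (g : F)
  : {set F * F} :=
  [set ab | ab.2 ^+ p - ab.2 == (fsec f g).[ab.1]].

Definition Gamma (F : finFieldType) (p : nat) (f : {poly {poly F}}) (eta : nat)
  : {set F} :=
  [set g | nonconst (fsec f g) && (eta <= #|[set ab.1 | ab in Zpts p f g]|)%N].

(* T = {(x,y,z) in S(F) : z in Gamma} ; a point is ((x,y),z) *)
Definition Tset (F : finFieldType) (p : nat) (f : {poly {poly F}}) (eta : nat)
  : {set F * F * F} :=
  [set P | (P.1.2 ^+ p - P.1.2 == (fsec f P.2).[P.1.1]) && (P.2 \in Gamma p f eta)].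

(* Positions of the code: 'I_#|T|, position t corresponds to point enum_val t. *)

Definition mono_ev (F : finFieldType) (T : {set F * F * F}) (i j k : nat)
  : 'rV[F]_#|T| :=
  \row_t (let P := enum_val t in P.1.1 ^+ i * P.1.2 ^+ j * P.2 ^+ k).

Definition expbox (a b c : nat) : seq (nat * nat * nat) :=
  [seq (ij, k) | ij <- [seq (i, j) | i <- iota 0 a.+1, j <- iota 0 b.+1],
                  k <- iota 0 c.+1].

Definition code (F : finFieldType) (T : {set F * F * F}) (a b c : nat)
  : {vspace 'rV[F]_#|T|} :=
  <<[seq mono_ev T e.1.1 e.1.2 e.2 | e <- expbox a b c]>>%VS.

Definition evalV (F : finFieldType) (a b c : nat)
  (cf : {ffun 'I_a.+1 * 'I_b.+1 * 'I_c.+1 -> F}) (P : F * F * F) : F :=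
  \sum_(e : 'I_a.+1 * 'I_b.+1 * 'I_c.+1)
     cf e * P.1.1 ^+ e.1.1 * P.1.2 ^+ e.1.2 * P.2 ^+ e.2.

Definition punct (F : fieldType) (n : nat) (I : {set 'I_n}) (v : 'rV[F]_n)
  : 'rV[F]_#|I| :=
  \row_j v 0 (enum_val j).

Definition pcode (F : fieldType) (n : nat) (C : {vspace 'rV[F]_n}) (I : {set 'I_n})
  : {vspace 'rV[F]_#|I|} :=
  (linfun (punct I) @: C)%VS.

Definition hdist (F : fieldType) (n : nat) (u v : 'rV[F]_n) : nat :=
  #|[set t | u 0 t != v 0 t]|.

Definition min_dist_ge (F : fieldType) (n : nat) (C : {vspace 'rV[F]_n}) (d : nat)
  : Prop :=
  forall u v, u \in C -> v \in C -> u != v -> (d <= hdist u v)%N.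

Definition fiberpos (F : finFieldType) (p : nat) (T : {set F * F * F})
  (t0 : 'I_#|T|) : {set 'I_#|T|} :=
  let P := enum_val t0 in
  [set t | enum_val t \in [set (P.1.1, P.1.2 + (val k)%:R, P.2) | k : 'I_p]].

Definition planepos (F : finFieldType) (T : {set F * F * F}) (t0 : 'I_#|T|)
  : {set 'I_#|T|} :=
  [set t | (enum_val t).2 == (enum_val t0).2].

From HB Require Import structures.
From mathcomp Require Import all_boot all_order all_algebra all_field.
Set Implicit Arguments. Unset Strict Implicit. Unset Printing Implicit Defensive.
Import GRing.Theory.
Local Open Scope ring_scope.

(* A function g = sum c_ijk x^i y^j z^k of V is a polynomial of degree at most
   p - rho2 in y whose coefficients are polynomials of degree at most
   eta - rho1 in x, themselves polynomials of degree at most rho3 in z; on a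
   fiber of pi_{x,z} (resp. a plane z = c) only the powers of y (resp. of x
   and y) vary, which bounds the dimensions.  Since y^p - y is invariant
   under y |-> y + k for k in F_p, every fiber of pi_{x,z} in T has p distinct
   y-coordinates, so a nonzero g vanishes at most at p - rho2 of them.  In a
   plane z = c with c in Gamma some y-coefficient of g is a nonzero polynomial
   in x, hence nonzero at rho1 of the at least eta abscissae of Z_c, and each
   of these carries a fiber with rho2 nonzeros.  If g vanishes on T, its
   x-coefficients vanish on the rho3 + 1 planes of hypothesis (3), so every
   z-coefficient has too many roots. *)

Section SumOfMonomials.
Variables (R : comNzRingType) (I : finType) (P : pred I) (c : I -> R) (d : I -> nat).

Lemma coef_sum_monomials m :
  (\sum_(e | P e) c e *: 'X^(d e))`_m = \sum_(e | P e && (d e == m)) c e.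
Proof.
rewrite coef_sum big_mkcondr /=; apply: eq_bigr => e _.
by rewrite coefZ coefXn eq_sym; case: (d e == m); rewrite ?mulr1 ?mulr0.
Qed.

Lemma horner_sum_monomials x :
  (\sum_(e | P e) c e *: 'X^(d e)).[x] = \sum_(e | P e) c e * x ^+ d e.
Proof. by rewrite horner_sum; apply: eq_bigr => e _; rewrite hornerZ hornerXn. Qed.

Lemma size_sum_monomials n : (forall e, P e -> d e <= n)%N ->
  (size (\sum_(e | P e) c e *: 'X^(d e))%R <= n.+1)%N.
Proof.
move=> le_d; apply: leq_trans (size_sum _ _ _) _; apply/bigmax_leqP => e Pe.
by apply: leq_trans (size_scale_leq _ _) _; rewrite size_polyXn ltnS le_d.
Qed.

End SumOfMonomials.

Section RootsCount.
Variable R : finIdomainType.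

Lemma card_roots_geq_poly_eq0 (q : {poly R}) n (A : {pred R}) :
  (size q <= n.+1)%N -> (n < #|A|)%N -> {in A, forall x, root q x} -> q = 0.
Proof.
move=> sz_q n_lt_A rootA; apply: (@roots_geq_poly_eq0 _ _ (enum A)).
- by apply/allP => x; rewrite mem_enum; apply: rootA.
- exact: enum_uniq.
- by rewrite -cardE (leq_trans sz_q).
Qed.

Lemma card_roots_leq (q : {poly R}) n :
  q != 0 -> (size q <= n.+1)%N -> (#|[pred x | root q x]| <= n)%N.
Proof.
move=> q_neq0 sz_q; rewrite leqNgt; apply: contra q_neq0 => n_lt.
by apply/eqP; apply: (card_roots_geq_poly_eq0 sz_q n_lt).
Qed.

End RootsCount.

Section PrimeCharacteristic.
Variables (R : nzRingType) (p : nat).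
Hypothesis pcharRp : p \in [pchar R].

Lemma natr_ord_inj : injective (fun k : 'I_p => k%:R : R).
Proof.
suff le_inj (k1 k2 : 'I_p) : (k1 <= k2)%N -> k1%:R = k2%:R :> R -> k1 = k2.
  move=> k1 k2; case: (leqP k1 k2) => [/le_inj//|/ltnW/le_inj inj21 /esym].
  by move/inj21.
move=> le12 /eqP; rewrite eq_sym -subr_eq0 -natrB // -(dvdn_pcharf pcharRp).
have lt_p : (k2 - k1 < p)%N by apply: leq_ltn_trans (leq_subr _ _) (ltn_ord _).
have [/eqP|pos_k /(dvdn_leq pos_k)] := posnP (k2 - k1); last by rewrite leqNgt lt_p.
by rewrite subn_eq0 => le21 _; apply: val_inj; apply/eqP; rewrite eqn_leq le12.
Qed.

Lemma artin_schreier_natr_shift (y : R) k :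
  (y + k%:R) ^+ p - (y + k%:R) = y ^+ p - y.
Proof.
have := pFrobenius_autD_comm pcharRp (commr_nat y k).
rewrite (pFrobenius_aut_nat pcharRp) !pFrobenius_autE => ->.
by rewrite opprD addrACA subrr addr0.
Qed.

End PrimeCharacteristic.

Lemma card_shift_nonroots (R : finIdomainType) (p n : nat) (q : {poly R}) y :
  p \in [pchar R] -> q != 0 -> (size q <= n.+1)%N ->
  (p - n <= #|[set k : 'I_p | q.[y + k%:R] != 0%R]|)%N.
Proof.
move=> pcharRp q_neq0 sz_q.
set Z := [set k : 'I_p | q.[y + k%:R] == 0].
have card_Z : (#|Z| <= n)%N.
  rewrite -(card_imset _ (f := fun k : 'I_p => y + k%:R)); last first.
    by move=> k1 k2 /addrI /(natr_ord_inj pcharRp).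
  apply: leq_trans (card_roots_leq q_neq0 sz_q); apply: subset_leq_card.
  apply/subsetP => x /imsetP[k]; rewrite !inE => /eqP qk ->.
  by rewrite /root qk.
have -> : [set k : 'I_p | q.[y + k%:R] != 0] = ~: Z by apply/setP => k; rewrite !inE.
by rewrite cardsCs setCK card_ord leq_sub2l.
Qed.

Lemma card_punct_positions (X : finType) (A : {set X}) (I : {set 'I_#|A|})
    (Q : pred X) :
  #|[set s : 'I_#|I| | Q (enum_val (enum_val s))]| = #|[set P in enum_val @: I | Q P]|.
Proof.
rewrite -(card_imset _ (f := fun s : 'I_#|I| => enum_val (enum_val s))); last first.
  by move=> s1 s2 /enum_val_inj /enum_val_inj.
apply: eq_card => P; rewrite !inE; apply/imsetP/andP => [[s]|[/imsetP[t tI ->] QP]].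
  by rewrite inE => Qs ->; split=> //; apply: imset_f; apply: enum_valP.
have [s est] : exists s : 'I_#|I|, enum_val s = t.
  by exists (enum_rank_in tI t); rewrite enum_rankK_in.
by exists s; rewrite ?inE est.
Qed.

Section CoefficientPolynomials.
Variables (F : finFieldType) (a b c : nat).
Local Notation E := ('I_a.+1 * 'I_b.+1 * 'I_c.+1)%type.
Variable cf : {ffun E -> F}.

Definition poly_in_y (x z : F) : {poly F} :=
  \sum_(e : E) (cf e * x ^+ e.1.1 * z ^+ e.2) *: 'X^(e.1.2).
Definition poly_in_x (z : F) (j : nat) : {poly F} :=
  \sum_(e : E | e.1.2 == j :> nat) (cf e * z ^+ e.2) *: 'X^(e.1.1).
Definition poly_in_z (i j : nat) : {poly F} :=
  \sum_(e : E | (e.1.2 == j :> nat) && (e.1.1 == i :> nat)) cf e *: 'X^(e.2).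

Lemma evalV_poly_in_y P : evalV cf P = (poly_in_y P.1.1 P.2).[P.1.2].
Proof.
by rewrite horner_sum_monomials; apply: eq_bigr => e _; rewrite mulrAC.
Qed.

Lemma size_poly_in_y x z : (size (poly_in_y x z) <= b.+1)%N.
Proof. by apply: size_sum_monomials => e _; rewrite -ltnS. Qed.

Lemma coef_poly_in_y x z j : (poly_in_y x z)`_j = (poly_in_x z j).[x].
Proof.
rewrite coef_sum_monomials horner_sum_monomials.
by apply: eq_bigr => e _; rewrite mulrAC.
Qed.

Lemma size_poly_in_x z j : (size (poly_in_x z j) <= a.+1)%N.
Proof. by apply: size_sum_monomials => e _; rewrite -ltnS. Qed.

Lemma coef_poly_in_x z j i : (poly_in_x z j)`_i = (poly_in_z i j).[z].
Proof. by rewrite coef_sum_monomials horner_sum_monomials. Qed.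

Lemma size_poly_in_z i j : (size (poly_in_z i j) <= c.+1)%N.
Proof. by apply: size_sum_monomials => e _; rewrite -ltnS. Qed.

Lemma coef_poly_in_z (e : E) : (poly_in_z e.1.1 e.1.2)`_e.2 = cf e.
Proof.
rewrite coef_sum_monomials (big_pred1 e) // => e'.
case: e e' => [[i j] k] [[i' j'] k'] /=; rewrite /pred1 /= !xpair_eqE -!val_eqE /=.
by rewrite [(j' == j) && _]andbC.
Qed.

Lemma evalV_poly_in_x P :
  evalV cf P = \sum_(j < b.+1) (poly_in_x P.2 j).[P.1.1] * P.1.2 ^+ j.
Proof.
rewrite evalV_poly_in_y (horner_coef_wide _ (size_poly_in_y _ _)).
by apply: eq_bigr => j _; rewrite coef_poly_in_y.
Qed.

End CoefficientPolynomials.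

Definition yfiber (F : finFieldType) (p : nat) (P : F * F * F) : {set F * F * F} :=
  [set ((P.1.1, P.1.2 + (val k)%:R), P.2) | k : 'I_p].

Section Surface.
Variables (F : finFieldType) (p : nat) (f : {poly {poly F}}) (eta : nat).
Hypothesis pcharFp : p \in [pchar F].
Local Notation T := (Tset p f eta).

Lemma yfiber_subset P : P \in T -> yfiber p P \subset T.
Proof.
move=> PT; apply/subsetP => Q /imsetP[k _ ->]; move: PT.
by rewrite !inE /= (artin_schreier_natr_shift pcharFp).
Qed.

Lemma fiberpos_points (t0 : 'I_#|T|) : enum_val @: fiberpos p t0 = yfiber p (enum_val t0).
Proof.
apply/setP => P; apply/imsetP/idP => [[t] | PF]; first by rewrite inE => ? ->.
have PT : P \in T := subsetP (yfiber_subset (enum_valP t0)) P PF.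
by exists (enum_rank_in PT P); rewrite ?inE enum_rankK_in.
Qed.

Lemma planepos_points (t0 : 'I_#|T|) :
  enum_val @: planepos t0 = [set P in T | P.2 == (enum_val t0).2].
Proof.
apply/setP => P; rewrite inE; apply/imsetP/andP => [[t] | [PT PP]].
  by rewrite inE => ? ->; split=> //; apply: enum_valP.
by exists (enum_rank_in PT P); rewrite ?inE enum_rankK_in.
Qed.

Lemma fiberpos_subset_planepos (t0 : 'I_#|T|) : fiberpos p t0 \subset planepos t0.
Proof. by apply/subsetP => t; rewrite !inE => /imsetP[k _ ->]. Qed.

Variables (a b c : nat) (cf : {ffun 'I_a.+1 * 'I_b.+1 * 'I_c.+1 -> F}).

Lemma card_yfiber_support P : poly_in_y cf P.1.1 P.2 != 0 ->
  (p - b <= #|[set Q in yfiber p P | evalV cf Q != 0%R]|)%N.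
Proof.
move=> q_neq0; apply: leq_trans (card_shift_nonroots P.1.2 pcharFp q_neq0
  (size_poly_in_y _ _ _)) _.
rewrite -(card_imset _ (f := fun k : 'I_p => ((P.1.1, P.1.2 + k%:R), P.2))).
  apply: subset_leq_card; apply/subsetP => Q /imsetP[k]; rewrite inE => qk ->.
  by rewrite !inE imset_f // (evalV_poly_in_y cf).
by move=> k1 k2 [/addrI /(natr_ord_inj pcharFp)].
Qed.

Lemma card_projx_nonroots g j : g \in Gamma p f eta -> poly_in_x cf g j != 0 ->
  (eta - a <= #|[set x in [set ab.1 | ab in Zpts p f g] |
                   (poly_in_x cf g j).[x] != 0%R]|)%N.
Proof.
set q := poly_in_x cf g j; set A := [set ab.1 | ab in Zpts p f g].
rewrite inE => /andP[_ eta_le_A] q_neq0.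
have roots_le_a : (#|A :&: [set x | root q x]| <= a)%N.
  apply: leq_trans (card_roots_leq q_neq0 (size_poly_in_x _ _ _)).
  by apply: subset_leq_card; apply/subsetP => x; rewrite !inE => /andP[].
have -> : [set x in A | q.[x] != 0] = A :\: [set x | root q x].
  by apply/setP => x; rewrite !inE andbC.
rewrite -(cardsID [set x | root q x] A) in eta_le_A.
by rewrite leq_subLR (leq_trans eta_le_A) // leq_add2r.
Qed.

Lemma card_plane_support g j : g \in Gamma p f eta -> poly_in_x cf g j != 0 ->
  ((eta - a) * (p - b) <= #|[set P in T | (P.2 == g) && (evalV cf P != 0%R)]|)%N.
Proof.
move=> gG q_neq0; set B := [set P in T | _].
have card_A' := card_projx_nonroots gG q_neq0.
set A' := [set x in _ | _] in card_A'.
have fiber_le x : x \in A' -> (p - b <= #|[set P in B | P.1.1 == x]|)%N.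
  rewrite !inE => /andP[/imsetP[[x' y] xyZ /= ->] qx_neq0].
  have P0T : ((x', y), g) \in T by move: xyZ gG; rewrite !inE => -> ->.
  have qy_neq0 : poly_in_y cf x' g != 0.
    by apply: contraNneq qx_neq0; rewrite -coef_poly_in_y => ->; rewrite coef0.
  apply: leq_trans (@card_yfiber_support ((x', y), g) qy_neq0) _.
  apply: subset_leq_card.
  apply/subsetP => P; rewrite inE => /andP[PF evP].
  rewrite inE [_ \in B]inE evP (subsetP (yfiber_subset P0T)) //=.
  by case/imsetP: PF => k _ -> /=; rewrite !eqxx.
apply: leq_trans (_ : \sum_(x in A') #|[set P in B | P.1.1 == x]| <= _)%N.
  by rewrite (leq_trans (leq_mul card_A' (leqnn _))) // -sum_nat_const leq_sum.
rewrite (@leq_trans #|[set P in B | P.1.1 \in A']|) //; last first.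
  by apply: subset_leq_card; apply/subsetP => P; rewrite inE => /andP[].
rewrite -sum1_card (partition_big (fun P => P.1.1) (mem A')) /=; last first.
  by move=> P; rewrite inE => /andP[].
apply: leq_sum => x xA'; rewrite -sum1_card; apply: eq_leq; apply: eq_bigl => P.
rewrite inE [_ \in [set _ in B | _]]inE.
by case: eqP => [->|]; rewrite ?xA' ?andbT ?andbF.
Qed.

End Surface.

Section EvaluationCode.
Variables (F : finFieldType) (T : {set F * F * F}) (a b c : nat).
Local Notation E := ('I_a.+1 * 'I_b.+1 * 'I_c.+1)%type.

(* Coefficient families are taken in [{ffun E -> F^o}], which is an [F]-vector
   space of dimension [#|E|]. *)
Definition evalT (cf : {ffun E -> F^o}) : 'rV[F]_#|T| := \row_t evalV cf (enum_val t).

Fact evalT_is_linear : linear evalT.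
Proof.
move=> k u w; apply/rowP => t; rewrite !mxE /evalV mulr_sumr -big_split.
by apply: eq_bigr => e _; rewrite !ffunE /= !mulrDl !mulrA.
Qed.

HB.instance Definition _ := GRing.isLinear.Build F _ _ *:%R evalT evalT_is_linear.

Lemma evalT_monomials cf : evalT cf = \sum_(e : E) cf e *: mono_ev T e.1.1 e.1.2 e.2.
Proof.
apply/rowP => t; rewrite !mxE summxE.
by apply: eq_bigr => e _; rewrite !mxE !mulrA.
Qed.

Lemma mem_expbox (e : E) : (e.1.1 : nat, e.1.2 : nat, e.2 : nat) \in expbox a b c.
Proof.
apply: (allpairs_f (fun ij k => (ij, k))); last by rewrite mem_iota /= add0n.
by apply: allpairs_f; rewrite mem_iota /= add0n.
Qed.

Lemma code_evalT : code T a b c = limg (linfun evalT).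
Proof.
apply/eqP; rewrite eqEsubv; apply/andP; split.
  apply/span_subvP => v /mapP[e' /allpairsP[[ij k] [/allpairsP[[i j] [+ + ->]] + ->]] ->].
  rewrite !mem_iota /= !add0n => lt_i lt_j lt_k.
  set e0 : E := (Ordinal lt_i, Ordinal lt_j, Ordinal lt_k).
  have -> : mono_ev T i j k = linfun evalT [ffun e => (e == e0)%:R].
    rewrite lfunE /= evalT_monomials (bigD1 e0) //= big1 ?addr0 => [|e ne].
      by rewrite ffunE eqxx scale1r.
    by rewrite ffunE (negbTE ne) scale0r.
  exact: memv_img (memvf _).
apply/subvP => _ /memv_imgP[cf _ ->]; rewrite lfunE /= evalT_monomials.
apply: memv_suml => e _; apply/memvZ/memv_span.
exact: (map_f (fun e => mono_ev T e.1.1 e.1.2 e.2) (mem_expbox e)).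
Qed.

Lemma code_evalTP v : v \in code T a b c -> exists cf, v = evalT cf.
Proof. by rewrite code_evalT => /memv_imgP[cf _ ->]; exists cf; rewrite lfunE. Qed.

Lemma dim_code : (forall cf, evalT cf = 0 -> cf = 0) ->
  \dim (code T a b c) = (a.+1 * b.+1 * c.+1)%N.
Proof.
move=> evalT_inj; rewrite code_evalT.
have /eqP ker0 : lker (linfun evalT) == 0%VS.
  apply/lker0P => cf1 cf2; rewrite !lfunE /= => eq12.
  by apply/eqP; rewrite -subr_eq0; apply/eqP/evalT_inj; rewrite linearB /= eq12 subrr.
have := limg_ker_dim (linfun evalT) fullv; rewrite ker0 capv0 dimv0 add0n => ->.
by rewrite dimvf /dim /= muln1 !card_prod !card_ord.
Qed.

End EvaluationCode.

Section Puncturing.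
Variables (F : fieldType) (n : nat) (I : {set 'I_n}).

Fact punct_is_linear : linear (@punct F n I).
Proof. by move=> k u w; apply/rowP => j; rewrite !mxE. Qed.

HB.instance Definition _ :=
  GRing.isLinear.Build F _ _ *:%R (@punct F n I) punct_is_linear.

End Puncturing.

Lemma dimv_leq_card_family (F : fieldType) n (U : {vspace 'rV[F]_n}) (J : finType)
    (phi : J -> 'rV[F]_n) :
  (forall u, u \in U -> exists d : J -> F, u = \sum_j d j *: phi j) ->
  (\dim U <= #|J|)%N.
Proof.
move=> spanU; have U_sub : (U <= <<[seq phi j | j <- enum J]>>)%VS.
  apply/subvP => u /spanU[d ->]; apply: memv_suml => j _; apply/memvZ/memv_span.
  by apply: map_f; rewrite mem_enum.
by rewrite (leq_trans (dimvS U_sub)) // (leq_trans (dim_span _)) // size_map -cardE.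
Qed.

Section PuncturedCode.
Variables (F : finFieldType) (T : {set F * F * F}) (a b c : nat) (I : {set 'I_#|T|}).
Local Notation E := ('I_a.+1 * 'I_b.+1 * 'I_c.+1)%type.
Local Notation C := (code T a b c).
Local Notation point s := (enum_val (enum_val s)).

Lemma pcode_evalP u : u \in pcode C I ->
  exists cf : {ffun E -> F}, forall s, u 0 s = evalV cf (point s).
Proof.
case/memv_imgP => _ /code_evalTP[cf ->] ->.
by exists cf => s; rewrite lfunE /= !mxE.
Qed.

Lemma min_dist_ge_pcode d :
  (forall cf : {ffun E -> F}, (exists2 P, P \in enum_val @: I & evalV cf P != 0) ->
     (d <= #|[set P in enum_val @: I | evalV cf P != 0%R]|)%N) ->
  min_dist_ge (pcode C I) d.
Proof.
move=> weight_ge u v uC vC u_neq_v; have [cf cfE] := pcode_evalP (memvB uC vC).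
have -> : hdist u v = #|[set s : 'I_#|I| | evalV cf (point s) != 0]|.
  by apply: eq_card => s; rewrite !inE -cfE !mxE subr_eq0.
rewrite (@card_punct_positions _ _ I (fun P => evalV cf P != 0)); apply: weight_ge.
have [s uv_s] : exists s, u 0 s != v 0 s.
  apply/existsP; apply: contraNT u_neq_v => /existsPn uv.
  by apply/eqP/rowP => s; apply/eqP/negPn/uv.
by exists (point s); rewrite ?imset_f ?enum_valP // -cfE !mxE subr_eq0.
Qed.

End PuncturedCode.

Section HierarchicalLocality.
Variables (F : finFieldType) (p : nat) (f : {poly {poly F}}) (eta a b c : nat).
Hypothesis pcharFp : p \in [pchar F].
Local Notation E := ('I_a.+1 * 'I_b.+1 * 'I_c.+1)%type.
Local Notation T := (Tset p f eta).
Local Notation C := (code T a b c).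
Local Notation point s := (enum_val (enum_val s)).

Lemma dim_pcode_fiberpos (t0 : 'I_#|T|) : (\dim (pcode C (fiberpos p t0)) <= b.+1)%N.
Proof.
rewrite -[b.+1]card_ord; apply: (dimv_leq_card_family
  (phi := fun j : 'I_b.+1 => \row_(s < #|fiberpos p t0|) (point s).1.2 ^+ j)).
move=> u /pcode_evalP[cf cfE].
exists (fun j : 'I_b.+1 => (poly_in_y cf (enum_val t0).1.1 (enum_val t0).2)`_j).
apply/rowP => s; rewrite cfE summxE (evalV_poly_in_y cf).
have := enum_valP s; rewrite inE => /imsetP[k _ /[dup] Ps ->] /=.
rewrite (horner_coef_wide _ (size_poly_in_y _ _ _)).
by apply: eq_bigr => j _; rewrite !mxE Ps.
Qed.

Lemma dim_pcode_planepos (t0 : 'I_#|T|) :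
  (\dim (pcode C (planepos t0)) <= a.+1 * b.+1)%N.
Proof.
rewrite mulnC -[b.+1]card_ord -[a.+1]card_ord -card_prod.
apply: (dimv_leq_card_family (phi := fun ji : 'I_b.+1 * 'I_a.+1 =>
  \row_(s < #|planepos t0|) ((point s).1.1 ^+ ji.2 * (point s).1.2 ^+ ji.1))).
move=> u /pcode_evalP[cf cfE].
exists (fun ji : 'I_b.+1 * 'I_a.+1 => (poly_in_x cf (enum_val t0).2 ji.1)`_ji.2).
apply/rowP => s; rewrite cfE summxE (evalV_poly_in_x cf).
have := enum_valP s; rewrite inE => /eqP ->.
under eq_bigr => j _ do
  rewrite (horner_coef_wide _ (size_poly_in_x cf _ _)) mulr_suml.
by rewrite pair_big; apply: eq_bigr => -[j i] _ /=; rewrite !mxE mulrA.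
Qed.

Lemma min_dist_pcode_fiberpos (t0 : 'I_#|T|) :
  min_dist_ge (pcode C (fiberpos p t0)) (p - b).
Proof.
apply: min_dist_ge_pcode => cf; rewrite fiberpos_points //.
move=> [_ /imsetP[k _ ->]]; rewrite (evalV_poly_in_y cf) /= => ev_neq0.
apply: card_yfiber_support => //; apply: contraNneq ev_neq0 => ->.
by rewrite horner0.
Qed.

Lemma min_dist_pcode_planepos (t0 : 'I_#|T|) :
  min_dist_ge (pcode C (planepos t0)) ((eta - a) * (p - b)).
Proof.
apply: min_dist_ge_pcode => cf; rewrite planepos_points.
have := enum_valP t0; rewrite inE => /andP[_ z0G].
move=> [P]; rewrite inE => /andP[_ /eqP Pz]; rewrite (evalV_poly_in_x cf) Pz.
have [j q_neq0 _|] := pickP (fun j : 'I_b.+1 => poly_in_x cf (enum_val t0).2 j != 0).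
  apply: leq_trans (card_plane_support pcharFp z0G q_neq0) (eq_leq (eq_card _)) => Q.
  by rewrite !inE andbA.
move=> q0; rewrite big1 ?eqxx // => j _.
by move/negbFE/eqP: (q0 j) => ->; rewrite horner0 mul0r.
Qed.

Lemma vanishing_on_T_coef_eq0 (S : {set F}) (cf : {ffun E -> F}) :
  (0 < (eta - a) * (p - b))%N -> S \subset Gamma p f eta -> (c < #|S|)%N ->
  (forall P, P \in T -> evalV cf P = 0) -> cf = 0.
Proof.
move=> pos SG c_lt_S cf_vanish.
have poly_in_x_eq0 g j : g \in S -> poly_in_x cf g j = 0.
  move=> gS; apply/eqP; apply: contraTT pos => q_neq0; rewrite -leqNgt.
  have no_support : [set P in T | (P.2 == g) && (evalV cf P != 0%R)] = set0.
    apply/setP => P; rewrite inE in_set0.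
    by case: (boolP (P \in T)) => // /cf_vanish ->; rewrite eqxx andbF.
  have := card_plane_support pcharFp (subsetP SG g gS) q_neq0.
  by rewrite no_support cards0.
apply/ffunP => e; rewrite ffunE -coef_poly_in_z.
rewrite (card_roots_geq_poly_eq0 (size_poly_in_z cf _ _) c_lt_S) ?coef0 // => g gS.
by rewrite /root -coef_poly_in_x poly_in_x_eq0 ?coef0.
Qed.

End HierarchicalLocality.

Theorem theorem3p1 (F : finFieldType) (p h : nat) (f : {poly {poly F}})
  (eta nu rho1 rho2 rho3 : nat) :
  prime p -> odd p -> (0 < h)%N -> #|F| = (p ^ h)%N -> (0 < eta)%N ->
  (forall g, g \in Gamma p f eta -> (degZ p f g <= nu)%N) ->
  (2 <= rho1 <= eta)%N -> (2 <= rho2 <= p)%N -> (rho3 <= p ^ 2 - 1)%N ->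
  (exists S : {set F},
     [/\ S \subset Gamma p f eta, (rho3.+1 <= #|S|)%N &
         forall g, g \in S ->
           ((nu * ((eta - rho1) + (p - rho2))).+1 <= #|Zpts p f g|)%N]) ->
  let T := Tset p f eta in
  let C := code T (eta - rho1) (p - rho2) rho3 in
  (forall t0 : 'I_#|T|,
     let I2 := fiberpos p t0 in
     let I1 := planepos t0 in
     [/\ (\dim (pcode C I2) <= (p - rho2).+1)%N,
         min_dist_ge (pcode C I2) rho2,
         (\dim (pcode C I1) <= (eta - rho1).+1 * (p - rho2).+1)%N,
         min_dist_ge (pcode C I1) (rho1 * rho2) &
         I2 \subset I1])
  /\ (forall cf : {ffun 'I_(eta - rho1).+1 * 'I_(p - rho2).+1 * 'I_rho3.+1 -> F},
        (forall P, P \in T -> evalV cf P = 0) -> cf = 0)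
  /\ \dim C = ((eta - rho1).+1 * (p - rho2).+1 * rho3.+1)%N.
Proof.
move=> p_prime _ _ card_F _ _ /andP[rho1_ge2 rho1_le] /andP[rho2_ge2 rho2_le] _.
move=> [S [SG card_S _]] T C.
have pcharFp := card_finPcharP card_F p_prime.
have rho1E : rho1 = (eta - (eta - rho1))%N by rewrite subKn.
have rho2E : rho2 = (p - (p - rho2))%N by rewrite subKn.
have pos : (0 < (eta - (eta - rho1)) * (p - (p - rho2)))%N.
  by rewrite -rho1E -rho2E muln_gt0 (leq_trans _ rho1_ge2) ?(leq_trans _ rho2_ge2).
have vanish_eq0 := vanishing_on_T_coef_eq0 pcharFp pos SG card_S.
split; [move=> t0 I2 I1; split | split=> //].
- exact: dim_pcode_fiberpos.
- by rewrite [X in min_dist_ge _ X]rho2E; apply: min_dist_pcode_fiberpos.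
- exact: dim_pcode_planepos.
- by rewrite [X in min_dist_ge _ (X * _)]rho1E [X in min_dist_ge _ (_ * X)]rho2E;
    apply: min_dist_pcode_planepos.
- exact: fiberpos_subset_planepos.
apply: dim_code => cf /rowP evalT_eq0; apply: vanish_eq0 => P PT.
by have := evalT_eq0 (enum_rank_in PT P); rewrite !mxE enum_rankK_in.
Qed.
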